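(* For each natural number $n\ge2$, $[S_n\ltimes\mathbb{T}^n,S_n\ltimes\mathbb{T}^n]=[S_n,S_n]\ltimes\mathbb{T}^n_1$, where $\mathbb{T}^n_1=\{t_{(\lambda_1,\dots,\lambda_n)}\in\mathbb{T}^n\mid\prod_{i=1}^n\lambda_i=1\}$.
   Context: $K$ is a field of characteristic zero. $\mathbb{T}^n=\{t_\lambda\mid\lambda=(\lambda_1,\dots,\lambda_n)\in(K^* )^n\}$ is the torus of automorphisms $t_\lambda:x_i\mapsto\lambda_ix_i,\ y_i\mapsto\lambda_i^{-1}y_i$ of the algebra $\mathbb{S}_n$ (generated by $x_i,y_i$ with $y_ix_i=1$ and $x_i,y_i$ commuting with $x_j,y_j$ for $i\ne j$), and $S_n$ is the symmetric group acting by automorphisms $x_i\mapsto x_{\sigma(i)},y_i\mapsto y_{\sigma(i)}$; in the group $S_n\ltimes\mathbb{T}^n$ they generate, $S_n$ acts on $\mathbb{T}^n$ by permuting the coordinates of $\lambda$. *)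

From HB Require Import structures.
From mathcomp Require Import all_boot all_order all_algebra all_fingroup.
Set Implicit Arguments. Unset Strict Implicit. Unset Printing Implicit Defensive.
Import GRing.Theory.
Local Open Scope ring_scope.

(* An element of S_n ⋉ T^n (inside the ambient monoid) is the automorphism
   t_lam ∘ sigma, recorded as the pair (lam, sigma). The torus part lives in
   {ffun 'I_n -> K}; membership in S_n ⋉ T^n requires all lam_i <> 0. *)
Record selt (K : fieldType) (n : nat) := SElt {
  tor : {ffun 'I_n -> K};
  sym : {perm 'I_n} }.

(* sigma ∘ t_mu ∘ sigma^{-1} = t_{mu ∘ sigma^{-1}} (sigma : x_i |-> x_{sigma i}).
   Hence (t_lam sigma)(t_mu tau) = t_{lam * (mu ∘ sigma^{-1})} (sigma ∘ tau).
   In mathcomp, (tau * sigma)%g is the function sigma ∘ tau. *)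
Definition smul (K : fieldType) (n : nat) (g h : selt K n) : selt K n :=
  SElt [ffun i => tor g i * tor h ((sym g)^-1%g i)] (sym h * sym g)%g.

Definition sinv (K : fieldType) (n : nat) (g : selt K n) : selt K n :=
  SElt [ffun i => (tor g (sym g i))^-1] (sym g)^-1%g.

Definition sone (K : fieldType) (n : nat) : selt K n :=
  SElt [ffun => 1] 1%g.

Definition in_SnTn (K : fieldType) (n : nat) (g : selt K n) : Prop :=
  forall i, tor g i != 0.

Definition scomm (K : fieldType) (n : nat) (g h : selt K n) : selt K n :=
  smul (smul (sinv g) (sinv h)) (smul g h).

Inductive in_derived (K : fieldType) (n : nat) : selt K n -> Prop :=
  | der_comm g h : in_SnTn g -> in_SnTn h -> in_derived (scomm g h)
  | der_one : in_derived (sone K n)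
  | der_mul g h : in_derived g -> in_derived h -> in_derived (smul g h)
  | der_inv g : in_derived g -> in_derived (sinv g).

Definition in_An_Tn1 (K : fieldType) (n : nat) (g : selt K n) : Prop :=
  in_SnTn g /\
  sym g \in ([~: [set: {perm 'I_n}], [set: {perm 'I_n}]])%g /\
  \prod_(i < n) tor g i = 1.

From mathcomp Require Import all_boot all_order all_algebra all_fingroup.
Import GRing.Theory.

(* Every element factors as t_lam sigma, and sigma |-> sigma is an
   (anti)homomorphism of S_n into S_n T^n, so [S_n, S_n] lies in the derived
   group. A torus element t_mu with prod mu = 1 is the commutator of t_lam with
   the cyclic shift, where lam_i = mu_0 ... mu_(i-1) are the prefix products:
   its entries are lam_i^-1 lam_(i+1) = mu_i, and the wrap-around entry
   lam_(n-1)^-1 equals mu_(n-1) because prod mu = 1. Conversely,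
   [S_n, S_n] T^n_1 is a subgroup containing every commutator, since
   t_lam sigma |-> prod_i lam_i is a homomorphism to the abelian group K^*. *)

Local Open Scope ring_scope.

Section SemidirectProduct.
Variables (K : fieldType) (n : nat).
Implicit Types (g h : selt K n) (lam mu : {ffun 'I_n -> K}) (s : {perm 'I_n}).

Lemma selt_ext g h : tor g =1 tor h -> sym g = sym h -> g = h.
Proof. by case: g h => [lg sg] [lh sh] /= /ffunP -> ->. Qed.

Definition torus_elt lam : selt K n := SElt lam 1%g.

Definition perm_elt s : selt K n := SElt [ffun => 1] s.

Lemma selt_torus_perm g : g = smul (torus_elt (tor g)) (perm_elt (sym g)).
Proof. by apply: selt_ext => [i|] /=; rewrite ?ffunE ?mulr1 ?mulg1. Qed.

Lemma prod_tor_smul g h :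
  \prod_i tor (smul g h) i = \prod_i tor g i * \prod_i tor h i.
Proof.
rewrite /smul /=; under eq_bigr do rewrite ffunE.
by rewrite big_split /= [X in _ = _ * X](reindex_inj (@perm_inj _ ((sym g)^-1)%g)).
Qed.

Lemma prod_tor_sinv g : \prod_i tor (sinv g) i = (\prod_i tor g i)^-1.
Proof.
rewrite /sinv /=; under eq_bigr do rewrite ffunE.
by rewrite prodfV [in RHS](reindex_inj (@perm_inj _ (sym g))).
Qed.

Lemma in_SnTn_smul g h : in_SnTn g -> in_SnTn h -> in_SnTn (smul g h).
Proof. by move=> ng nh i; rewrite ffunE mulf_neq0. Qed.

Lemma in_SnTn_sinv g : in_SnTn g -> in_SnTn (sinv g).
Proof. by move=> ng i; rewrite ffunE invr_neq0. Qed.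

Lemma sym_scomm g h : sym (scomm g h) = [~ (sym h)^-1, (sym g)^-1]%g.
Proof. by rewrite /= /commg /conjg !invgK !mulgA. Qed.

Lemma prod_tor_scomm g h : in_SnTn g -> in_SnTn h ->
  \prod_i tor (scomm g h) i = 1.
Proof.
move=> ng nh; rewrite !prod_tor_smul !prod_tor_sinv mulrACA !mulVf ?mulr1 //.
  by apply/prodf_neq0 => i _; apply: nh.
by apply/prodf_neq0 => i _; apply: ng.
Qed.

Lemma in_An_Tn1_sone : in_An_Tn1 (sone K n).
Proof.
split; first by move=> i; rewrite ffunE oner_neq0.
by split; [exact: group1 | apply: big1 => i _; rewrite ffunE].
Qed.

Lemma in_An_Tn1_smul g h : in_An_Tn1 g -> in_An_Tn1 h -> in_An_Tn1 (smul g h).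
Proof.
move=> [ng [sg pg]] [nh [sh ph]]; split; first exact: in_SnTn_smul.
by split; [rewrite groupM | rewrite prod_tor_smul pg ph mulr1].
Qed.

Lemma in_An_Tn1_sinv g : in_An_Tn1 g -> in_An_Tn1 (sinv g).
Proof.
move=> [ng [sg pg]]; split; first exact: in_SnTn_sinv.
by split; [rewrite groupV | rewrite prod_tor_sinv pg invr1].
Qed.

Lemma in_An_Tn1_scomm g h : in_SnTn g -> in_SnTn h -> in_An_Tn1 (scomm g h).
Proof.
move=> ng nh; split; first by rewrite /scomm; do !apply: in_SnTn_smul; try apply: in_SnTn_sinv.
by split; [rewrite sym_scomm mem_commg ?inE | exact: prod_tor_scomm].
Qed.

Lemma in_derived_An_Tn1 g : in_derived g -> in_An_Tn1 g.
Proof.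
elim=> {g} [g h|||]; [exact: in_An_Tn1_scomm | exact: in_An_Tn1_sone
  | by move=> g h _ + _; apply: in_An_Tn1_smul
  | by move=> g _; apply: in_An_Tn1_sinv].
Qed.

Lemma in_SnTn_perm_elt s : in_SnTn (perm_elt s).
Proof. by move=> i; rewrite ffunE oner_neq0. Qed.

Lemma perm_elt1 : perm_elt 1%g = sone K n.
Proof. by apply: selt_ext => //= i; rewrite !ffunE. Qed.

Lemma perm_eltM s t : perm_elt (s * t)%g = smul (perm_elt t) (perm_elt s).
Proof. by apply: selt_ext => //= i; rewrite !ffunE mulr1. Qed.

Lemma perm_elt_commg s t :
  perm_elt [~ s, t]%g = scomm (perm_elt t^-1%g) (perm_elt s^-1%g).
Proof.
apply: selt_ext => [i|] /=; first by rewrite !ffunE !invr1 !mulr1.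
by rewrite /commg /conjg !invgK !mulgA.
Qed.

Lemma in_derived_perm_elt s :
  s \in [~: [set: {perm 'I_n}], [set: {perm 'I_n}]]%g -> in_derived (perm_elt s).
Proof.
move=> /gen_prodgP [k [c c_comm ->]].
elim: k c c_comm => [|k IHk] c c_comm; first by rewrite big_ord0 perm_elt1; exact: der_one.
rewrite big_ord_recr perm_eltM; apply: der_mul; last by apply: IHk => i.
have /imset2P [x y _ _ ->] := c_comm ord_max.
by rewrite perm_elt_commg; apply: der_comm; apply: in_SnTn_perm_elt.
Qed.

Lemma scomm_torus_perm lam s : scomm (torus_elt lam) (perm_elt s) =
  torus_elt [ffun i => (lam i)^-1 * lam (s i)].
Proof.
apply: selt_ext => [i|] /=; last by rewrite !(mul1g, mulg1, invg1) mulgV.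
by rewrite !ffunE invg1 mulg1 invgK perm1 invr1 !mulr1.
Qed.

Definition prefix_prod mu (k : nat) : K := \prod_(j < n | (j < k)%N) mu j.

Lemma prefix_prod0 mu : prefix_prod mu 0 = 1.
Proof. exact: big_pred0. Qed.

Lemma prefix_prodS mu (i : 'I_n) :
  prefix_prod mu i.+1 = prefix_prod mu i * mu i.
Proof.
rewrite /prefix_prod (bigD1 i) ?ltnSn //= mulrC; congr (_ * _).
by apply: eq_bigl => j; rewrite ltnS andbC -ltn_neqAle.
Qed.

Lemma prefix_prod_n mu : prefix_prod mu n = \prod_i mu i.
Proof. by apply: eq_bigl => j; rewrite ltn_ord. Qed.

Lemma prefix_prod_neq0 mu k : (forall i, mu i != 0) -> prefix_prod mu k != 0.
Proof. by move=> nmu; apply/prodf_neq0 => j _. Qed.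

Lemma prefix_prod_ordS mu (i : 'I_n) : (forall j, mu j != 0) ->
  \prod_j mu j = 1 -> (prefix_prod mu i)^-1 * prefix_prod mu (ordS i) = mu i.
Proof.
move=> nmu pmu; have npre := prefix_prod_neq0 mu i nmu.
have [lt_iS_n | ge_iS_n] := ltnP i.+1 n.
  by rewrite /= modn_small // prefix_prodS mulKf.
have eq_iS_n : i.+1 = n by apply/eqP; rewrite eqn_leq ge_iS_n ltn_ord.
rewrite /= eq_iS_n modnn prefix_prod0 mulr1.
apply: (mulIf npre); rewrite mulVf // mulrC -prefix_prodS eq_iS_n.
by rewrite prefix_prod_n.
Qed.

Lemma in_derived_torus_elt mu : (forall i, mu i != 0) -> \prod_i mu i = 1 ->
  in_derived (torus_elt mu).
Proof.
move=> nmu pmu; pose shift := perm (@ordS_inj n).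
pose lam := [ffun i : 'I_n => prefix_prod mu i].
have -> : torus_elt mu = scomm (torus_elt lam) (perm_elt shift).
  rewrite scomm_torus_perm; congr torus_elt; apply/ffunP => i.
  by rewrite !ffunE permE prefix_prod_ordS.
apply: der_comm; last exact: in_SnTn_perm_elt.
by move=> i; rewrite ffunE; apply: prefix_prod_neq0.
Qed.

End SemidirectProduct.

Theorem lemma5p3 (K : fieldType) (charK0 : [pchar K]%R =i pred0) (n : nat)
  (hn : (2 <= n)%N) (g : selt K n) :
  in_derived g <-> in_An_Tn1 g.
Proof.
split; first exact: in_derived_An_Tn1.
move=> [ng [sg pg]]; rewrite [g]selt_torus_perm.
apply: der_mul; last exact: in_derived_perm_elt.
exact: in_derived_torus_elt.
Qed.
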